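(* Let $l_0\in\mathbb N$ and $G\in\operatorname{2\text{-}d\text{-}Ring}_{l_0}$. If $l_0\ge2$ is even, the vertices alternate between black and white along the cyclic ring order of $G$. If $l_0$ is odd, the colours alternate along the cyclic ring order except for exactly one pair of cyclically consecutive vertices which are both black.
   Context: For a finite vertex set $V$ and $N\ge1$, a route through $V$ of length $N$ is a sequence $\mathbf i=(i_1,\dots,i_N)\in V^N$ whose set of entries equals $V$; its circuit multigraph $G_{\mathbf i}$ has vertex set $V$ and edges $1,\dots,N$, edge $k<N$ from $i_k$ to $i_{k+1}$, edge $N$ from $i_N$ to $i_1$; $\mathcal C_{V,N}$ is the set of these. The black vertices are $B(G_{\mathbf i})=\{i_t:t\text{ odd}\}$, the others white. An undirected connection between $v,w$ (possibly $v=w$) exists if $G$ has an edge from $v$ to $w$ or from $w$ to $v$; $\operatorname U(G)$ is the simple undirected graph (loops allowed) with an edge per undirected connection. A directed multigraph is balanced if its edges split into pairs $(e,e')$ with the head of $e$ the tail of $e'$ and vice versa. $G\in\mathcal C_{V,2l_0}$ with $\#V=l_0$ is of ring-type if $\operatorname U(G)$ is a cycle through all $l_0$ vertices (for $l_0=1$ a single loop, for $l_0=2$ a single edge) and each undirected connection consists of exactly two edges of $G$; $\operatorname{2\text{-}d\text{-}Ring}_{l_0}$ is the set of balanced ring-type graphs with $l_0$ vertices. The ring order is the cyclic order of the vertices along this cycle (for $l_0=1$ the single vertex is consecutive to itself). *)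

From mathcomp Require Import all_boot.
Set Implicit Arguments. Unset Strict Implicit. Unset Printing Implicit Defensive.

(* A route of length N through the finite vertex set V is a map
   i : 'I_N -> V (0-indexed: i k is the paper's i_{k+1}), with N >= 1,
   whose set of entries is all of V.  The circuit multigraph G_i has edges
   k : 'I_N, edge k going from i k to i (k+1 mod N).  Since edge k's tail is
   i k, G_i determines i, so we identify G_i with i. *)

Section Circuit.
Variables (V : finType) (N : nat) (i : 'I_N -> V).

Definition route : bool := (0 < N) && [forall v, [exists k, i k == v]].

Definition etail (k : 'I_N) : V := i k.
Definition ehead (k : 'I_N) : V := i (ordS k).

(* black vertices: i_t with t odd (1-indexed), i.e. index k with k even *)
Definition black (v : V) : bool := [exists k : 'I_N, ~~ odd k && (i k == v)].

Definition edge_between (v w : V) (k : 'I_N) : bool :=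
  ((etail k == v) && (ehead k == w)) || ((etail k == w) && (ehead k == v)).

Definition uconn (v w : V) : bool := [exists k, edge_between v w k].

(* balanced: the edges split into pairs (e, e') with head e = tail e'
   and tail e = head e'; i.e. a fixed-point-free involution p of the edges *)
Definition balanced : Prop :=
  exists p : 'I_N -> 'I_N, forall k,
    [/\ p (p k) = k, p k != k, etail (p k) = ehead k & ehead (p k) = etail k].

(* c : 'I_#|V| -> V is a ring order: a cyclic enumeration of all vertices
   such that the undirected connections of G are exactly the pairs of
   cyclically consecutive vertices {c j, c (j+1 mod #|V|)}; i.e. U(G) is
   the cycle through all #|V| vertices in this order (a loop if #|V| = 1,
   a single edge if #|V| = 2). *)
Definition ring_order (c : 'I_#|V| -> V) : Prop :=
  bijective c /\
  forall v w, uconn v w <->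
    exists j : 'I_#|V|,
      ((v == c j) && (w == c (ordS j))) || ((w == c j) && (v == c (ordS j))).

Definition ring_type : Prop :=
  (exists c, ring_order c) /\
  forall v w, uconn v w -> #|[set k | edge_between v w k]| = 2.

End Circuit.

(* 2-d-Ring_{l0}: balanced ring-type circuit graphs in C_{V, 2 l0}, #|V| = l0 *)
Definition two_d_ring (V : finType) (i : 'I_(2 * #|V|) -> V) : Prop :=
  [/\ route i, ring_type i & balanced i].

From mathcomp Require Import all_boot zify.
From Stdlib Require Import ZArith.

(* Number the vertices 0..l-1 along the ring order and follow the walk sending time k to the
   position of the k-th vertex of the circuit.  Each step goes to a cyclic neighbour, every
   ring edge is traversed, a vertex is black iff it is visited at an even time, and, since
   each undirected connection carries exactly two edges paired by the balance, each directed
   ring edge is traversed at most once per period 2l.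
   If l is even, the parity of the position flips at every step, so each vertex is visited at
   times of a single parity and the colours alternate.
   If l is odd, lift the walk to Z.  The lift has winding number zero, and a range of heights
   wider than l would force some directed edge to be used twice, so the heights fill exactly
   an interval [lo, lo + l].  Every vertex except the bottom one m (which is also the top one)
   has a single height, hence a single visiting parity, so colours alternate away from m;
   m is visited at the heights lo and lo + l, of different parities, so it is black, while
   its neighbours, at the heights lo + 1 and lo + l - 1, get different colours. *)

Set Implicit Arguments. Unset Strict Implicit. Unset Printing Implicit Defensive.

Lemma ordS_cases l (j : 'I_l) :
  (ordS j = j.+1 :> nat /\ j.+1 < l) \/ (ordS j = 0 :> nat /\ j.+1 = l).
Proof.
rewrite /=; case: (ltngtP j.+1 l) => [lt_jl | | ->]; last by right; rewrite modnn.
- by left; rewrite modn_small.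
- by rewrite ltnNge ltn_ord.
Qed.

Lemma ordS_neq l (j : 'I_l) : 1 < l -> ordS j != j.
Proof.
by move=> l_gt1; apply/eqP => /(congr1 (@nat_of_ord _)); case: (ordS_cases j); lia.
Qed.

Lemma ordS2_neq l (j : 'I_l) : 2 < l -> ordS (ordS j) != j.
Proof.
move=> l_gt2; apply/eqP => /(congr1 (@nat_of_ord _)).
by case: (ordS_cases (ordS j)); case: (ordS_cases j); lia.
Qed.

Lemma odd_ordS l (j : 'I_l) : ~~ odd l -> odd (ordS j) = ~~ odd j.
Proof.
move=> l_even; case: (ordS_cases j) => -[-> l_j] //=.
by have := congr1 odd l_j; rewrite /= (negbTE l_even) => /negbFE ->.
Qed.

Lemma Zdivide_lt (n a b : Z) : (n | b - a)%Z -> (a < b)%Z -> (a + n <= b)%Z.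
Proof. by move=> n_ba lt_ab; have := Z.divide_pos_le n (b - a) ltac:(lia) n_ba; lia. Qed.

Lemma Zdivide_small (n a b : Z) :
  (n | a - b)%Z -> (0 <= a < n)%Z -> (0 <= b < n)%Z -> a = b.
Proof.
move=> n_ab a_rng b_rng; case: (Z.lt_total a b) => [lt_ab | [// | lt_ba]].
  have n_ba : (n | b - a)%Z by case: n_ab => t e; exists (- t)%Z; lia.
  by have := Zdivide_lt n_ba lt_ab; lia.
by have := Zdivide_lt n_ab lt_ba; lia.
Qed.

Lemma Z_ivt_up (f : nat -> Z) a b (y : Z) :
  (forall k, f k.+1 = f k + 1 \/ f k.+1 = f k - 1)%Z -> a <= b ->
  (f a <= y < f b)%Z -> exists s, [/\ a <= s < b, f s = y & f s.+1 = (y + 1)%Z].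
Proof.
move=> f_step; elim: b => [|b IHb]; first by rewrite leqn0 => /eqP->; lia.
rewrite leq_eqVlt ltnS => /orP[/eqP-> | le_ab] y_rng; first lia.
case: (Z.lt_ge_cases y (f b)) => [lt_yb | le_by].
- have [s [/andP[le_as lt_sb] fs fs1]] := IHb le_ab (conj y_rng.1 lt_yb).
  by exists s; split; lia.
- by exists b; split; case: (f_step b); lia.
Qed.

Lemma Z_ivt_down (f : nat -> Z) a b (y : Z) :
  (forall k, f k.+1 = f k + 1 \/ f k.+1 = f k - 1)%Z -> a <= b ->
  (f b <= y < f a)%Z -> exists s, [/\ a <= s < b, f s = (y + 1)%Z & f s.+1 = y].
Proof.
move=> f_step le_ab y_rng.
have opp_step k : (- f k.+1 = - f k + 1 \/ - f k.+1 = - f k - 1)%Z by case: (f_step k); lia.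
have [s [? ? ?]] := Z_ivt_up (y := (- y - 1)%Z) opp_step le_ab ltac:(lia).
by exists s; split; lia.
Qed.

Lemma periodic_modn (T : Type) (f : nat -> T) n :
  (forall k, f (k + n) = f k) -> forall k, f k = f (k %% n).
Proof.
move=> f_per k; rewrite {1}(divn_eq k n) addnC.
by elim: (k %/ n) => [|q IHq]; rewrite ?addn0 // mulSnr addnA f_per.
Qed.

Lemma Zmin_attained (f : nat -> Z) n :
  exists2 k0, k0 <= n & forall k, k <= n -> (f k0 <= f k)%Z.
Proof.
elim: n => [|n [k0 le_k0n k0_min]]; first by exists 0 => // k; rewrite leqn0 => /eqP->; lia.
have k0_min' k : k <= n.+1 -> k != n.+1 -> (f k0 <= f k)%Z.
  by rewrite leq_eqVlt ltnS => /orP[/eqP-> /eqP // | /k0_min].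
case: (Z.le_gt_cases (f k0) (f n.+1)) => [le | gt].
- exists k0 => [|k le_kn]; first exact: leqW.
  by case: (eqVneq k n.+1) => [-> | ne] //; exact: k0_min'.
- exists n.+1 => // k le_kn.
  by case: (eqVneq k n.+1) => [-> | ne]; [lia | have := k0_min' k le_kn ne; lia].
Qed.

Lemma periodic_min_attained (f : nat -> Z) n : 0 < n ->
  (forall k, f (k + n) = f k) -> exists k0, forall k, (f k0 <= f k)%Z.
Proof.
move=> n_gt0 f_per; have [k0 _ k0_min] := Zmin_attained f n.-1.
exists k0 => k; rewrite (periodic_modn f_per k); apply: k0_min.
by rewrite -ltnS prednK // ltn_pmod.
Qed.

Lemma periodic_max_attained (f : nat -> Z) n : 0 < n ->
  (forall k, f (k + n) = f k) -> exists k0, forall k, (f k <= f k0)%Z.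
Proof.
move=> n_gt0 f_per; have opp_per k : (- f (k + n)%nat = - f k)%Z by rewrite f_per.
have [k0 k0_min] := periodic_min_attained n_gt0 opp_per.
by exists k0 => k; have := k0_min k; lia.
Qed.

Section RingWalk.

Variables (l : nat) (w : nat -> 'I_l) (B : 'I_l -> bool).

Hypothesis w_step : forall k, w k.+1 = ordS (w k) \/ w k = ordS (w k.+1).
Hypothesis w_cover : forall j, exists k,
  (w k = j /\ w k.+1 = ordS j) \/ (w k = ordS j /\ w k.+1 = j).
Hypothesis B_walk : forall j, reflect (exists2 k, w k = j & ~~ odd k) (B j).

Definition single_parity (j : 'I_l) :=
  forall a b, w a = j -> w b = j -> odd a = odd b.

Lemma B_single_parity j k : single_parity j -> w k = j -> B j = ~~ odd k.
Proof.
move=> pj wk; case: B_walk => [[k' wk' ek'] | nB].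
  by rewrite (pj _ _ wk wk') ek'.
by case ek: (odd k) => //; case: nB; exists k; rewrite ?ek.
Qed.

Lemma B_alternate j : single_parity j -> single_parity (ordS j) -> B j != B (ordS j).
Proof.
move=> pj pSj; have [k [[wk wk1] | [wk wk1]]] := w_cover j.
  by rewrite (B_single_parity pj wk) (B_single_parity pSj wk1) /=; case: odd.
by rewrite (B_single_parity pj wk1) (B_single_parity pSj wk) /=; case: odd.
Qed.

Lemma B_single_vertex : l = 1 -> forall j, B j.
Proof.
move=> l1 j; apply/B_walk; exists 0 => //; apply: val_inj => /=.
by have := ltn_ord (w 0); have := ltn_ord j; lia.
Qed.

Section EvenRing.

Hypothesis l_even : ~~ odd l.

Lemma odd_walk k : odd (w k) = odd (w 0) (+) odd k.
Proof.
elim: k => [|k IHk]; first by rewrite addbF.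
have -> : odd (w k.+1) = ~~ odd (w k).
  by case: (w_step k) => e; rewrite e odd_ordS ?negbK.
by rewrite IHk addbN.
Qed.

Lemma single_parity_even j : single_parity j.
Proof. by move=> a b wa wb; apply: (@addbI (odd (w 0))); rewrite -!odd_walk wa wb. Qed.

End EvenRing.

Section OddRing.

Hypotheses (l_gt2 : 2 < l) (l_odd : odd l).
Hypothesis w_period : forall k, w (k + 2 * l) = w k.
Hypothesis w_arc_uniq : forall a b, w a = w b -> w a.+1 = w b.+1 -> a = b %[mod 2 * l].

Local Notation L := (Z.of_nat l).

Fixpoint height k : Z :=
  if k is k'.+1 then (height k' + if w k'.+1 == ordS (w k') then 1 else -1)%Z
  else 0%Z.

Lemma height_up k : w k.+1 = ordS (w k) -> height k.+1 = (height k + 1)%Z.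
Proof. by move=> /= ->; rewrite eqxx. Qed.

Lemma height_down k : w k = ordS (w k.+1) -> height k.+1 = (height k - 1)%Z.
Proof.
move=> e /=; case: eqP => [e' | _]; last by [].
by move: (ordS2_neq (w k) l_gt2); rewrite -e' -e eqxx.
Qed.

Lemma height_step k :
  (height k.+1 = height k + 1 /\ w k.+1 = ordS (w k))%Z \/
  (height k.+1 = height k - 1 /\ w k = ordS (w k.+1))%Z.
Proof.
by case: (w_step k) => e; [left; rewrite height_up | right; rewrite height_down].
Qed.

Lemma height_pm1 k : (height k.+1 = height k + 1 \/ height k.+1 = height k - 1)%Z.
Proof. by case: (height_step k) => -[-> _]; [left | right]. Qed.

Lemma height_congr k : (L | height k - (Z.of_nat (w k) - Z.of_nat (w 0)))%Z.
Proof.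
elim: k => [|k [t IHk]]; first by exists 0%Z; rewrite /=; lia.
case: (height_step k) => -[-> e]; move: IHk; rewrite e.
  by case: (ordS_cases (w k)) => -[-> wrap] IHk; [exists t | exists (t + 1)%Z]; nia.
by case: (ordS_cases (w k.+1)) => -[-> wrap] IHk; [exists t | exists (t - 1)%Z]; nia.
Qed.

Lemma same_vertex_iff a b : w a = w b <-> (L | height a - height b)%Z.
Proof.
have [ta eta] := height_congr a; have [tb etb] := height_congr b.
split => [e | [t et]]; first by exists (ta - tb)%Z; rewrite e in eta; lia.
apply: val_inj => /=; apply: Nat2Z.inj; apply: (@Zdivide_small L).
- by exists (t - ta + tb)%Z; lia.
- by have := ltn_ord (w a); lia.
- by have := ltn_ord (w b); lia.
Qed.

Lemma height_parity k : (2 | height k - Z.of_nat k)%Z.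
Proof.
elim: k => [|k [t IHk]]; first by exists 0%Z.
by case: (height_pm1 k) => ->; [exists t | exists (t - 1)%Z]; lia.
Qed.

Lemma height_arc_uniq a b : (L | height a - height b)%Z ->
  (height a.+1 - height a = height b.+1 - height b)%Z -> a = b %[mod 2 * l].
Proof.
move=> dab step_ab; apply: w_arc_uniq; apply/same_vertex_iff => //.
by have -> : (height a.+1 - height b.+1 = height a - height b)%Z by lia.
Qed.

Lemma height_period : height (2 * l) = 0%Z.
Proof.
set N := 2 * l.
have [u eu] : (L | height N)%Z.
  by have := (same_vertex_iff N 0).1 (w_period 0); rewrite Z.sub_0_r.
have no_wrap s1 s2 : s1 < N -> s2 < N -> height s2 = (height s1 + L)%Z ->
    (height s2.+1 - height s2 = height s1.+1 - height s1)%Z -> False.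
  move=> lt_s1 lt_s2 e12 step12.
  have : s2 = s1 %[mod N] by apply: height_arc_uniq => //; exists 1%Z; lia.
  by rewrite !modn_small // => e; move: e12; rewrite e; lia.
have height0 : height 0 = 0%Z by [].
case: (Z.lt_ge_cases L (height N)) => [up | le_up].
  have [s1 [/andP[_ lt_s1] e1 f1]] :=
    Z_ivt_up (y := 0%Z) height_pm1 (leq0n N) ltac:(lia).
  have [s2 [/andP[_ lt_s2] e2 f2]] :=
    Z_ivt_up (y := L) height_pm1 (leq0n N) ltac:(lia).
  by exfalso; apply: (no_wrap s1 s2) => //; lia.
case: (Z.lt_ge_cases (height N) (- L)) => [down | le_down].
  have [s1 [/andP[_ lt_s1] e1 f1]] :=
    Z_ivt_down (y := (-1)%Z) height_pm1 (leq0n N) ltac:(lia).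
  have [s2 [/andP[_ lt_s2] e2 f2]] :=
    Z_ivt_down (y := (- L - 1)%Z) height_pm1 (leq0n N) ltac:(lia).
  by exfalso; apply: (no_wrap s2 s1) => //; lia.
(* Now |height N| <= l, and the even number height N cannot be +-l as l is odd. *)
have [t et] := height_parity N.
have : (u = -1 \/ u = 0 \/ u = 1)%Z by nia.
by case=> [| [|]] eu'; rewrite eu eu'; lia.
Qed.

Lemma height_periodic k : height (k + 2 * l) = height k.
Proof.
elim: k => [|k IHk]; first by rewrite add0n height_period.
by rewrite addSn /= IHk -addSn !w_period.
Qed.

Lemma height_mod k : height k = height (k %% (2 * l)).
Proof. exact: periodic_modn height_periodic k. Qed.

Lemma height_oscillation a b : (height b <= height a + L)%Z.
Proof.
case: (Z.le_gt_cases (height b) (height a + L)) => // gt_b; exfalso.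
set b' := a * (2 * l) + b.
have e_b : height b' = height b by rewrite height_mod modnMDl -height_mod.
have le_ab : a <= b'.
  by apply: leq_trans (leq_addr _ _); rewrite leq_pmulr //; lia.
have [s1 [_ e1 f1]] := Z_ivt_up (y := height a) height_pm1 le_ab ltac:(lia).
have [s2 [_ e2 f2]] := Z_ivt_up (y := (height a + L)%Z) height_pm1 le_ab ltac:(lia).
have : s2 = s1 %[mod 2 * l] by apply: height_arc_uniq; [exists 1%Z | ]; lia.
by move=> e; move: e2; rewrite height_mod e -height_mod e1; lia.
Qed.

Lemma height_span klo khi :
  (forall k, height klo <= height k)%Z -> (forall k, height k <= height khi)%Z ->
  height khi = (height klo + L)%Z.
Proof.
move=> lo_min hi_max; have := @height_oscillation klo khi.
have [k [[wk wk1] | [wk1 wk]]] := w_cover (w khi).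
- have lt_k : (height k < height khi)%Z.
    by have := hi_max k.+1; rewrite height_up ?wk1 ?wk //; lia.
  have := Zdivide_lt ((same_vertex_iff khi k).1 (esym wk)) lt_k.
  by have := lo_min k; lia.
- have lt_k1 : (height k.+1 < height khi)%Z.
    by have := hi_max k; rewrite height_down ?wk1 ?wk //; lia.
  have := Zdivide_lt ((same_vertex_iff khi k.+1).1 (esym wk)) lt_k1.
  by have := lo_min k.+1; lia.
Qed.

Lemma single_parity_off_bottom klo j :
  (forall k, height klo <= height k)%Z -> j != w klo -> single_parity j.
Proof.
move=> lo_min nj a b wa wb.
have bounds s : (height klo <= height s <= height klo + L)%Z.
  by have := lo_min s; have := @height_oscillation klo s; lia.
have off_bottom s : w s = j -> height s <> height klo.
  move=> ws e; suff : w s = w klo by rewrite ws => ej; rewrite ej eqxx in nj.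
  by apply/same_vertex_iff; rewrite e Z.sub_diag; exact: Z.divide_0_r.
have eab : height a = height b.
  case: (Z.lt_total (height a) (height b)) => [lt_ab | [// | lt_ba]].
    have := Zdivide_lt ((same_vertex_iff b a).1 (etrans wb (esym wa))) lt_ab.
    by have := bounds a; have := bounds b; have := off_bottom a wa; lia.
  have := Zdivide_lt ((same_vertex_iff a b).1 (etrans wa (esym wb))) lt_ba.
  by have := bounds a; have := bounds b; have := off_bottom b wb; lia.
by have [ta eta] := height_parity a; have [tb etb] := height_parity b; lia.
Qed.

Lemma odd_ring_defect : exists m,
  [/\ B m, B (ordS m) != B (ord_pred m) & forall j, j != m -> single_parity j].
Proof.
have N_gt0 : 0 < 2 * l by lia.
have [klo lo_min] := periodic_min_attained N_gt0 height_periodic.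
have [khi hi_max] := periodic_max_attained N_gt0 height_periodic.
have span := height_span lo_min hi_max.
set m := w klo.
have w_khi : w khi = m by apply/same_vertex_iff; rewrite span; exists 1%Z; lia.
have par : odd klo != odd khi.
  by have [t_lo e_lo] := height_parity klo; have [t_hi e_hi] := height_parity khi; lia.
have up_lo : w klo.+1 = ordS m.
  by case: (height_step klo) => -[e_step e]; [| have := lo_min klo.+1; lia].
have down_hi : ordS (w khi.+1) = m.
  by case: (height_step khi) => -[e_step e]; [have := hi_max khi.+1; lia | rewrite -e].
have Sm_ne : ordS m != m := ordS_neq m (ltnW l_gt2).
have pm_ne : w khi.+1 != m by apply: contraNneq Sm_ne => e; rewrite -{1}e down_hi.
have pure j := @single_parity_off_bottom klo j lo_min.
exists m; split => //.
- apply/B_walk; case e: (odd klo); last by exists klo; rewrite ?e.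
  by exists khi => //; move: par; rewrite e; case: (odd khi).
- rewrite -down_hi ordSK down_hi.
  rewrite (B_single_parity (pure _ Sm_ne) up_lo) (B_single_parity (pure _ pm_ne) erefl).
  by rewrite /= !negbK.
Qed.

End OddRing.

End RingWalk.

Lemma one_defect_ring l (B : 'I_l -> bool) (m : 'I_l) : 1 < l ->
  B m -> B (ordS m) != B (ord_pred m) ->
  (forall j, j != m -> ordS j != m -> B j != B (ordS j)) ->
  exists j0, forall j, if j == j0 then B j && B (ordS j) else B j != B (ordS j).
Proof.
move=> l_gt1 Bm B_nb alt; set p := ord_pred m.
have Sp : ordS p = m := ord_predK m.
have pm : p != m by apply: contraNneq (ordS_neq m l_gt1) => e; rewrite -{1}e Sp.
exists (if B (ordS m) then m else p) => j.
case: (eqVneq j m) => [-> | jm].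
  by case: (B (ordS m)); rewrite ?eqxx ?(eq_sym m p) ?(negbTE pm) Bm.
case: (eqVneq j p) => [-> | jp].
  rewrite Sp; move: B_nb.
  by case: (B (ordS m)); rewrite ?eqxx ?(negbTE pm) Bm; case: (B p).
have -> : (j == if B (ordS m) then m else p) = false by case: ifP => _; apply/negbTE.
by apply: alt => //; apply: contra_neq jp => Sj; rewrite /p -Sj ordSK.
Qed.

Lemma ring_balanced_arc_uniq (V : finType) n (i : 'I_n -> V) (e1 e2 : 'I_n) :
  ring_type i -> balanced i -> etail i e1 != ehead i e1 ->
  etail i e1 = etail i e2 -> ehead i e1 = ehead i e2 -> e1 = e2.
Proof.
move=> [_ card2] [p p_pair] nloop t12 h12; case: (eqVneq e1 e2) => // ne12; exfalso.
have [_ pe1 tp hp] := p_pair e1.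
have ne2p : e2 != p e1 by apply: contraNneq nloop => e; rewrite t12 e tp.
have conn : uconn i (etail i e1) (ehead i e1).
  by apply/existsP; exists e1; rewrite /edge_between !eqxx.
have : #|e1 |: [set e2; p e1]| <= 2.
  rewrite -(card2 _ _ conn); apply/subset_leq_card/subsetP => e.
  rewrite !inE => /or3P[] /eqP->;
  by rewrite /edge_between ?tp ?hp -?t12 -?h12 !eqxx ?orbT.
by rewrite cardsU1 cards2 !inE negb_or ne12 eq_sym pe1 ne2p.
Qed.

Section CircuitWalk.

Variables (V : finType) (i : 'I_(2 * #|V|) -> V).
Variables (c : 'I_#|V| -> V) (g : V -> 'I_#|V|).
Hypotheses (c_ring : ring_order i c) (cK : cancel c g) (gK : cancel g c).
Hypothesis N_gt0 : 0 < 2 * #|V|.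

Definition tick k : 'I_(2 * #|V|) := Ordinal (ltn_pmod k N_gt0).

Definition walk k := g (i (tick k)).

Lemma tick_ord (e : 'I_(2 * #|V|)) : tick e = e.
Proof. by apply: val_inj; rewrite /= modn_small. Qed.

Lemma tickS k : tick k.+1 = ordS (tick k).
Proof. by apply: val_inj; rewrite /= -addn1 -(addn1 (k %% _)) modnDml. Qed.

Lemma walk_period k : walk (k + 2 * #|V|) = walk k.
Proof. by congr (g (i _)); apply: val_inj; rewrite /= modnDr. Qed.

Lemma walk_step k : walk k.+1 = ordS (walk k) \/ walk k = ordS (walk k.+1).
Proof.
have conn : uconn i (i (tick k)) (i (tick k.+1)).
  by apply/existsP; exists (tick k); rewrite /edge_between /etail /ehead tickS !eqxx.
have [j /orP[] /andP[/eqP e1 /eqP e2]] := (c_ring.2 _ _).1 conn; [left | right];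
  by rewrite /walk e1 e2 !cK.
Qed.

Lemma walk_cover j : exists k,
  (walk k = j /\ walk k.+1 = ordS j) \/ (walk k = ordS j /\ walk k.+1 = j).
Proof.
have /existsP[e] : uconn i (c j) (c (ordS j)).
  by apply/(c_ring.2 _ _).2; exists j; rewrite !eqxx.
rewrite /edge_between /etail /ehead => /orP[] /andP[/eqP e1 /eqP e2];
  exists e; [left | right]; by rewrite /walk tickS tick_ord e1 e2 !cK.
Qed.

Lemma black_walk j : reflect (exists2 k, walk k = j & ~~ odd k) (black i (c j)).
Proof.
apply: (iffP existsP) => [[e /andP[e_even /eqP ie]] | [k wk k_even]].
  by exists e; rewrite /walk ?tick_ord ?ie ?cK.
by exists (tick k); rewrite /= odd_mod ?oddM // k_even -wk /walk gK eqxx.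
Qed.

Lemma walk_arc_uniq : ring_type i -> balanced i -> 1 < #|V| ->
  forall a b, walk a = walk b -> walk a.+1 = walk b.+1 -> a = b %[mod 2 * #|V|].
Proof.
move=> i_ring i_bal V_gt1 a b /(can_inj gK) wab /(can_inj gK) wab1.
have nloop : i (tick a) != i (tick a.+1).
  apply: contraTneq (ordS_neq (walk a) V_gt1) => e.
  by case: (walk_step a); rewrite /walk e => <-; rewrite eqxx.
have := ring_balanced_arc_uniq (e1 := tick a) (e2 := tick b) i_ring i_bal.
by rewrite /etail /ehead -!tickS => /(_ nloop wab wab1) /(congr1 val).
Qed.

End CircuitWalk.

Theorem lemma4p8 (V : finType) (i : 'I_(2 * #|V|) -> V) :
  two_d_ring i ->
  forall c : 'I_#|V| -> V, ring_order i c ->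
    (~~ odd #|V| -> 2 <= #|V| ->
       forall j : 'I_#|V|, black i (c j) != black i (c (ordS j))) /\
    (odd #|V| ->
       exists j0 : 'I_#|V|, forall j : 'I_#|V|,
         if j == j0 then black i (c j) && black i (c (ordS j))
         else black i (c j) != black i (c (ordS j))).
Proof.
move=> [i_route i_ring i_bal] c c_ring; have [g cK gK] := c_ring.1.
have N_gt0 : 0 < 2 * #|V| by case/andP: i_route.
have w_step := walk_step c_ring cK N_gt0.
have w_cover := walk_cover c_ring cK N_gt0.
have B_walk := black_walk i cK gK N_gt0.
split => [V_even _ j | V_odd].
  have even_par := single_parity_even w_step V_even.
  exact (B_alternate w_cover B_walk (even_par j) (even_par (ordS j))).
have [V1 | V_gt2] : #|V| = 1 \/ 2 < #|V| by lia.
  exists (walk i g N_gt0 0) => j.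
  have -> : j = walk i g N_gt0 0.
    by apply: ord_inj; have := ltn_ord j; have := ltn_ord (walk i g N_gt0 0); lia.
  by rewrite eqxx !(B_single_vertex B_walk V1).
have [m [Bm B_nb single]] := odd_ring_defect w_step w_cover B_walk V_gt2 V_odd
  (walk_period i g N_gt0) (walk_arc_uniq c_ring cK gK i_ring i_bal (ltnW V_gt2)).
apply: one_defect_ring (ltnW V_gt2) Bm B_nb _ => j jm Sjm.
exact (B_alternate w_cover B_walk (single _ jm) (single _ Sjm)).
Qed.
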